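(* Let $\alpha,\beta^1,\dots,\beta^m,\gamma^1,\dots,\gamma^r\in\mathrm{ord}$ with $m,r\ge1$. 1. If $\alpha\le\beta^1,\dots,\beta^m$ and $\beta^j\le\gamma^1,\dots,\gamma^r$ for each $j\in\{1,\dots,m\}$, then $\alpha\le\gamma^1,\dots,\gamma^r$. 2. If $\alpha<\beta^1,\dots,\beta^m$ and $\beta^j\le\gamma^1,\dots,\gamma^r$ for each $j$, then $\alpha<\gamma^1,\dots,\gamma^r$. 3. If $\alpha\le\beta^1,\dots,\beta^m$ and $\beta^j<\gamma^1,\dots,\gamma^r$ for each $j$, then $\alpha<\gamma^1,\dots,\gamma^r$.
   Context: Work constructively. Let $\mathfrak F$ be a set of index sets containing $\mathbb N$ and each $\mathbb N_k=\{n\in\mathbb N:n<k\}$ ($k\ge0$), closed (up to isomorphism) under finitely enumerated subsets, sets of finitely enumerated subsets, and disjoint unions indexed by elements of $\mathfrak F$. A finitely enumerated subset of $A$ is one given by a map $\mathbb N_k\to A$; write $F\subseteq_f I$. The set $\mathrm{ord}$ is inductively generated by $\underline 0$ and, for every family $(\alpha_i)_{i\in I}$ with $I\in\mathfrak F$, $\alpha_i\in\mathrm{ord}$, an element $\mathrm S(\alpha_i)_{i\in I}$; for such $\alpha$, $I_\alpha=I$ and $\alpha_i$ are its definitional subordinals; $I_{\underline 0}=\emptyset$. For a finite list $F$ in $I_\alpha$, $\alpha_F$ is the list of the $\alpha_i$, $i\in F$. Relations between an element and a nonempty finite list, by simultaneous induction: $\alpha\le\beta^1,\dots,\beta^m$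 means $\alpha_i<\beta^1,\dots,\beta^m$ for all $i\in I_\alpha$; $\alpha<\beta^1,\dots,\beta^m$ means there exist $F_1\subseteq_f I_{\beta^1},\dots,F_m\subseteq_f I_{\beta^m}$, not all empty, with $\alpha\le\beta^1_{F_1},\dots,\beta^m_{F_m}$ (concatenated list). *)

From Stdlib Require Import List.
Import ListNotations.
Set Implicit Arguments.

Definition Nk (k : nat) : Type := {n : nat | n < k}.

Record iso (A B : Type) : Type := Iso {
  iso_f : A -> B; iso_g : B -> A;
  iso_fg : forall b, iso_f (iso_g b) = b;
  iso_gf : forall a, iso_g (iso_f a) = a }.

Definition fin_enum (A : Type) : Type := {k : nat & Nk k -> A}.

Definition enum_subset (A : Type) (k : nat) (f : Nk k -> A) : Type :=
  {x : A | exists i, f i = x}.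

(* A set of index sets, given as a family of codes with a decoding. *)
Record Fam : Type := { code : Type; El : code -> Type }.
Arguments El {f} _.

Record fam_closed (F : Fam) : Prop := {
  fc_nat : exists c : code F, inhabited (iso (El c) nat);
  fc_Nk : forall k, exists c : code F, inhabited (iso (El c) (Nk k));
  fc_subset : forall (c : code F) (k : nat) (f : Nk k -> El c),
      exists c' : code F, inhabited (iso (El c') (enum_subset f));
  fc_subsets : forall c : code F,
      exists c' : code F, inhabited (iso (El c') (fin_enum (El c)));
  fc_sigma : forall (c : code F) (d : El c -> code F),
      exists c' : code F, inhabited (iso (El c') {i : El c & El (d i)}) }.

Inductive ord (F : Fam) : Type :=
  | ozero : ord F
  | osucc : forall c : code F, (El c -> ord F) -> ord F.
Arguments ozero {F}.

Definition Idx (F : Fam) (a : ord F) : Type :=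
  match a with ozero => Empty_set | @osucc _ c _ => El c end.

Definition sub (F : Fam) (a : ord F) : Idx a -> ord F :=
  match a as a0 return Idx a0 -> ord F with
  | ozero => fun e => match e with end
  | @osucc _ c f => f
  end.

(* A choice of a finite list F_j in I_{beta^j} for each beta^j: a list of
   pairs (beta^j, F_j). *)
Definition sel (F : Fam) := list {b : ord F & list (Idx b)}.

Definition sel_list (F : Fam) (s : sel F) : list (ord F) :=
  flat_map (fun p => map (@sub F (projT1 p)) (projT2 p)) s.

Inductive ord_le (F : Fam) : ord F -> list (ord F) -> Prop :=
  | ord_le_intro : forall (a : ord F) (bs : list (ord F)),
      (forall i : Idx a, ord_lt (sub a i) bs) -> ord_le a bs
with ord_lt (F : Fam) : ord F -> list (ord F) -> Prop :=
  | ord_lt_intro : forall (a : ord F) (bs : list (ord F)) (s : sel F),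
      map (@projT1 _ _) s = bs ->
      (exists p, In p s /\ projT2 p <> []) ->
      ord_le a (sel_list s) ->
      ord_lt a bs.

From Stdlib Require Import List.
Import ListNotations.
Set Implicit Arguments.
Unset Strict Implicit.

(* Read [a < cs] as: some nonempty list [l] of definitional subordinals
   [b_i] of members [b] of [cs] satisfies [a <= l].  Since [<=] is monotone
   under list inclusion, [l] may be taken in any order and with repetitions.  Then [a <= bs < cs] follows by gluing the witnesses of
   [b < cs], for all [b] in [bs], into a single [l] and using [<]-[<=]
   transitivity for the subordinals of [a]; and [a < bs <= cs] reduces to
   [a <= l < cs] for the witness [l] of [a < bs].  Induction on [a] closes the
   loop, and transitivity of [<=] is then immediate. *)

Section OrdTransitivity.

Variable F : Fam.

Definition subord : Type := {b : ord F & Idx b}.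

Definition subord_val (p : subord) : ord F := sub (projT1 p) (projT2 p).

Definition sel_subords (s : sel F) : list subord :=
  flat_map (fun q => map (existT (@Idx F) (projT1 q)) (projT2 q)) s.

Lemma map_subord_val_sel_subords (s : sel F) :
  map subord_val (sel_subords s) = sel_list s.
Proof.
  induction s as [|[b is] s IH]; simpl; auto.
  unfold sel_subords, sel_list in *; simpl.
  rewrite map_app, map_map; f_equal; exact IH.
Qed.

Lemma in_sel_subords_base (s : sel F) (p : subord) :
  In p (sel_subords s) -> In (projT1 p) (map (@projT1 _ _) s).
Proof.
  unfold sel_subords; rewrite in_flat_map.
  intros [q [Hq Hp]]; apply in_map_iff in Hp.
  destruct Hp as [i [<- _]]; simpl; apply in_map; exact Hq.
Qed.

Lemma sel_subords_nonempty (s : sel F) :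
  (exists q, In q s /\ projT2 q <> []) -> sel_subords s <> [].
Proof.
  intros [[b [|i is]] [Hin Hne]] Hnil; [now elim Hne|].
  assert (Hi : In (existT (@Idx F) b i) (sel_subords s)).
  { unfold sel_subords; apply in_flat_map.
    exists (existT _ b (i :: is)); simpl; auto. }
  rewrite Hnil in Hi; exact Hi.
Qed.

Lemma sel_add (s : sel F) (b : ord F) (i : Idx b) :
  In b (map (@projT1 _ _) s) ->
  exists s', map (@projT1 _ _) s' = map (@projT1 _ _) s /\
    incl (sel_list s) (sel_list s') /\ In (sub b i) (sel_list s') /\
    exists q, In q s' /\ projT2 q <> [].
Proof.
  induction s as [|[b' is] s IH]; simpl; [tauto|].
  intros [->|Hb].
  - exists (existT _ b (i :: is) :: s); simpl.
    split; [reflexivity|]. split; [intros x Hx; right; exact Hx|].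
    split; [left; reflexivity|].
    exists (existT _ b (i :: is)); simpl; split; [left; reflexivity|congruence].
  - destruct (IH Hb) as [s' [Hbase [Hincl [Hi Hne]]]].
    exists (existT _ b' is :: s'); simpl; rewrite Hbase.
    split; [reflexivity|].
    split; [apply incl_app; [apply incl_appl | apply incl_appr]; auto using incl_refl|].
    split; [apply in_or_app; right; exact Hi|].
    destruct Hne as [q [Hq Hq']]; exists q; auto.
Qed.

Lemma sel_of_subords (cs : list (ord F)) (l : list subord) :
  (forall p, In p l -> In (projT1 p) cs) ->
  exists s, map (@projT1 _ _) s = cs /\ incl (map subord_val l) (sel_list s) /\
    (l <> [] -> exists q, In q s /\ projT2 q <> []).
Proof.
  induction l as [|[b i] l IH]; intros Hl.
  - exists (map (fun b => existT (fun b => list (Idx b)) b []) cs).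
    rewrite map_map, map_id.
    split; [reflexivity|]. split; [intros x []|congruence].
  - destruct IH as [s [Hbase [Hincl _]]]; [intros p Hp; apply Hl; right; exact Hp|].
    assert (Hb : In b (map (@projT1 _ _) s)).
    { rewrite Hbase; apply (Hl (existT _ b i)); left; reflexivity. }
    destruct (sel_add i Hb) as [s' [Hbase' [Hincl' [Hi Hne]]]].
    exists s'; split; [congruence|]; split; [|intros _; exact Hne].
    intros x [<-|Hx]; [exact Hi|apply Hincl', Hincl, Hx].
Qed.

Lemma ord_le_sub (a : ord F) (cs : list (ord F)) :
  ord_le a cs -> forall i, ord_lt (sub a i) cs.
Proof. destruct 1; assumption. Qed.

Lemma ord_lt_witness (a : ord F) (cs : list (ord F)) :
  ord_lt a cs -> exists l : list subord, l <> [] /\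
    (forall p, In p l -> In (projT1 p) cs) /\ ord_le a (map subord_val l).
Proof.
  destruct 1 as [a cs s Hbase Hne Hle].
  exists (sel_subords s).
  split; [apply sel_subords_nonempty; exact Hne|].
  split; [intros p Hp; subst cs; apply in_sel_subords_base; exact Hp|].
  rewrite map_subord_val_sel_subords; exact Hle.
Qed.

Lemma ord_le_incl (a : ord F) (cs cs' : list (ord F)) :
  ord_le a cs -> incl cs cs' -> ord_le a cs'.
Proof.
  revert cs cs'; induction a as [|c f IH]; intros cs cs' Hle Hincl;
    constructor; [intros []|intro i].
  destruct (ord_lt_witness (ord_le_sub Hle i)) as [l [Hne [Hbase Hlel]]].
  destruct (sel_of_subords (cs := cs') (fun p Hp => Hincl _ (Hbase p Hp)))
    as [s [Hbase' [Hincl' Hnes]]].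
  exact (ord_lt_intro s Hbase' (Hnes Hne) (IH i _ _ Hlel Hincl')).
Qed.

Lemma ord_lt_of_witness (a : ord F) (cs : list (ord F)) (l : list subord) :
  l <> [] -> (forall p, In p l -> In (projT1 p) cs) ->
  ord_le a (map subord_val l) -> ord_lt a cs.
Proof.
  intros Hne Hbase Hle.
  destruct (sel_of_subords Hbase) as [s [Hbase' [Hincl Hnes]]].
  exact (ord_lt_intro s Hbase' (Hnes Hne) (ord_le_incl Hle Hincl)).
Qed.

Lemma ord_lt_common_witness (bs cs : list (ord F)) :
  (forall b, In b bs -> ord_lt b cs) ->
  exists l : list subord, (bs <> [] -> l <> []) /\
    (forall p, In p l -> In (projT1 p) cs) /\
    forall b, In b bs -> ord_le b (map subord_val l).
Proof.
  induction bs as [|b bs IH]; intros Hlt.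
  - exists []; split; [congruence|]; split; intros ? [].
  - destruct IH as [l' [_ [Hbase' Hle']]]; [intros b' Hb'; apply Hlt; right; exact Hb'|].
    destruct (ord_lt_witness (Hlt b (or_introl eq_refl))) as [l [Hne [Hbase Hle]]].
    exists (l ++ l'); rewrite map_app.
    split; [intros _ Hnil; apply app_eq_nil in Hnil; tauto|].
    split; [intros p Hp; apply in_app_or in Hp; destruct Hp; auto|].
    intros x [<-|Hx]; eapply ord_le_incl; eauto using incl_appl, incl_appr, incl_refl.
Qed.

Definition ord_lt_le_trans_at (a : ord F) : Prop :=
  forall bs cs, ord_lt a bs -> (forall b, In b bs -> ord_le b cs) -> ord_lt a cs.

Lemma ord_le_lt_trans_of_sub (a : ord F) :
  (forall i, ord_lt_le_trans_at (sub a i)) ->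
  forall bs cs, bs <> [] -> ord_le a bs ->
  (forall b, In b bs -> ord_lt b cs) -> ord_lt a cs.
Proof.
  intros IH bs cs Hne Hle Hlt.
  destruct (ord_lt_common_witness Hlt) as [l [Hnel [Hbase Hlel]]].
  apply (ord_lt_of_witness (Hnel Hne) Hbase).
  constructor; intro i; exact (IH i _ _ (ord_le_sub Hle i) Hlel).
Qed.

Lemma ord_lt_le_trans_of_sub (a : ord F) :
  (forall i, ord_lt_le_trans_at (sub a i)) -> ord_lt_le_trans_at a.
Proof.
  intros IH bs cs Hlt Hle.
  destruct (ord_lt_witness Hlt) as [l [Hne [Hbase Hlel]]].
  apply (ord_le_lt_trans_of_sub IH (bs := map subord_val l)).
  - intro Hnil; apply map_eq_nil in Hnil; contradiction.
  - exact Hlel.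
  - intros x Hx; apply in_map_iff in Hx; destruct Hx as [p [<- Hp]].
    exact (ord_le_sub (Hle _ (Hbase p Hp)) (projT2 p)).
Qed.

Lemma ord_lt_le_trans (a : ord F) : ord_lt_le_trans_at a.
Proof.
  induction a as [|c f IH]; apply ord_lt_le_trans_of_sub; [intros []|exact IH].
Qed.

Lemma ord_le_lt_trans (a : ord F) (bs cs : list (ord F)) :
  bs <> [] -> ord_le a bs -> (forall b, In b bs -> ord_lt b cs) -> ord_lt a cs.
Proof. apply ord_le_lt_trans_of_sub; intro i; apply ord_lt_le_trans. Qed.

Lemma ord_le_trans (a : ord F) (bs cs : list (ord F)) :
  ord_le a bs -> (forall b, In b bs -> ord_le b cs) -> ord_le a cs.
Proof.
  intros Hle Hbs; constructor; intro i.
  exact (ord_lt_le_trans (ord_le_sub Hle i) Hbs).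
Qed.

End OrdTransitivity.

(* Neither the closure of the index sets nor [cs <> []] is needed. *)
Theorem lemma4p2 (F : Fam) (HF : fam_closed F) (a : ord F)
    (bs cs : list (ord F)) (Hbs : bs <> []) (Hcs : cs <> []) :
  ((ord_le a bs /\ (forall b, In b bs -> ord_le b cs)) -> ord_le a cs) /\
  ((ord_lt a bs /\ (forall b, In b bs -> ord_le b cs)) -> ord_lt a cs) /\
  ((ord_le a bs /\ (forall b, In b bs -> ord_lt b cs)) -> ord_lt a cs).
Proof.
  split; [|split]; intros [Ha Hb].
  - exact (ord_le_trans Ha Hb).
  - exact (ord_lt_le_trans Ha Hb).
  - exact (ord_le_lt_trans Hbs Ha Hb).
Qed.
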